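(* Let $\mathfrak n$ be a 2-step nilpotent real Lie algebra with center $\mathfrak z$, and let $\omega$ be a closed 2-form on $\mathfrak n$ with $\ker(\omega)\cap\mathfrak z=\{0\}$, where $\ker(\omega)=\{W\in\mathfrak n:\omega(W,V)=0\ \forall V\in\mathfrak n\}$. Then $\ker(\omega)$ is an abelian subalgebra of $\mathfrak n$. As a consequence: if $\langle\cdot,\cdot\rangle$ is an inner product on $\mathfrak n$, $\mathfrak v=\mathfrak z^\perp$, and $F:\mathfrak n\to\mathfrak n$ is a skew-symmetric map with $F(\mathfrak v)\subseteq\mathfrak z$, $F(\mathfrak z)\subseteq\mathfrak v$, such that $\omega(X,Y)=\langle F(X),Y\rangle$ is closed and $F(\mathfrak v)=\mathfrak z$, then $\ker(F|_{\mathfrak v})$ is an abelian subalgebra of $\mathfrak n$.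
   Context: A real Lie algebra is 2-step nilpotent if $[[U,V],W]=0$ for all $U,V,W$. A 2-form $\omega$ on $\mathfrak n$ is closed iff $\omega([U,V],W)+\omega([V,W],U)+\omega([W,U],V)=0$ for all $U,V,W\in\mathfrak n$. *)

From HB Require Import structures.
From mathcomp Require Import all_boot all_order all_algebra.
From mathcomp Require Import reals.
Set Implicit Arguments. Unset Strict Implicit. Unset Printing Implicit Defensive.
Import Order.TTheory GRing.Theory Num.Theory.
Local Open Scope ring_scope.

Section LieDefs.
Variables (R : realType) (V : vectType R).

Definition linear_map (F : V -> V) : Prop :=
  forall (a : R) (x y : V), F (a *: x + y) = a *: F x + F y.

Definition bilinear_form (b : V -> V -> R) : Prop :=
  (forall (a : R) (x y z : V), b (a *: x + y) z = a * b x z + b y z) /\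
  (forall (a : R) (x y z : V), b x (a *: y + z) = a * b x y + b x z).

Definition lie_bracket (br : V -> V -> V) : Prop :=
  [/\ (forall (a : R) (x y z : V), br (a *: x + y) z = a *: br x z + br y z),
      (forall (a : R) (x y z : V), br x (a *: y + z) = a *: br x y + br x z),
      (forall x : V, br x x = 0) &
      (forall x y z : V, br x (br y z) + br y (br z x) + br z (br x y) = 0)].

Definition two_step_nilpotent (br : V -> V -> V) : Prop :=
  forall u v w : V, br (br u v) w = 0.

Definition center (br : V -> V -> V) (Z : V) : Prop :=
  forall U : V, br Z U = 0.

Definition two_form (w : V -> V -> R) : Prop :=
  bilinear_form w /\ (forall x : V, w x x = 0).

Definition closed_form (br : V -> V -> V) (w : V -> V -> R) : Prop :=
  forall U W X : V, w (br U W) X + w (br W X) U + w (br X U) W = 0.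

Definition form_kernel (w : V -> V -> R) (X : V) : Prop :=
  forall Y : V, w X Y = 0.

Definition subspace (S : V -> Prop) : Prop :=
  S 0 /\ (forall (a : R) (x y : V), S x -> S y -> S (a *: x + y)).

Definition abelian_subalgebra (br : V -> V -> V) (S : V -> Prop) : Prop :=
  [/\ subspace S,
      (forall x y : V, S x -> S y -> S (br x y)) &
      (forall x y : V, S x -> S y -> br x y = 0)].

Definition inner_product (ip : V -> V -> R) : Prop :=
  [/\ bilinear_form ip, (forall x y : V, ip x y = ip y x) &
      (forall x : V, x != 0 -> 0 < ip x x)].

End LieDefs.

From HB Require Import structures.
From mathcomp Require Import all_boot all_order all_algebra.
From mathcomp Require Import reals.
Set Implicit Arguments. Unset Strict Implicit. Unset Printing Implicit Defensive.
Import Order.TTheory GRing.Theory Num.Theory.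
Local Open Scope ring_scope.

(* For X, Y in the kernel of a closed 2-form w, the closedness identity for
   (X, Y, T) reduces to w([X,Y], T) = 0, so [X,Y] lies in the kernel; in a
   2-step nilpotent algebra [X,Y] is also central, hence it vanishes when the
   kernel meets the centre trivially.  For the consequence, w(X,Y) = <F X, Y>
   has kernel ker F, which meets the centre trivially because F maps onto the
   centre and is skew-symmetric. *)

Section FormsAndSubspaces.
Variables (R : realType) (V : vectType R).

Lemma linear_map0 (F : V -> V) : linear_map F -> F 0 = 0.
Proof.
by move=> Flin; have := Flin (-1) 0 0; rewrite scaler0 addr0 scaleN1r addNr.
Qed.

Lemma bilinear_form0l (b : V -> V -> R) z : bilinear_form b -> b 0 z = 0.
Proof.
by case=> bl _; have := bl (-1) 0 0 z; rewrite scaler0 addr0 mulN1r addNr.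
Qed.

Lemma bilinear_form0r (b : V -> V -> R) z : bilinear_form b -> b z 0 = 0.
Proof.
by case=> _ bl; have := bl (-1) z 0 0; rewrite scaler0 addr0 mulN1r addNr.
Qed.

Lemma two_form_skew (w : V -> V -> R) :
  two_form w -> forall x y, w x y = - w y x.
Proof.
case=> [[wl wr] walt] x y; have := walt (1 *: x + y).
rewrite wl !wr !walt !mul1r add0r addr0 => /eqP.
by rewrite addr_eq0 => /eqP.
Qed.

Lemma form_kernel_subspace (b : V -> V -> R) :
  bilinear_form b -> subspace (form_kernel b).
Proof.
move=> bb; split=> [y|a x y hx hy z]; first exact: bilinear_form0l.
by case: bb => bl _; rewrite bl hx hy mulr0 addr0.
Qed.

Lemma subspace_linear_kernel (F : V -> V) :
  linear_map F -> subspace (fun x => F x = 0).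
Proof.
move=> Flin; split=> [|a x y Fx Fy]; first exact: linear_map0.
by rewrite Flin Fx Fy scaler0 addr0.
Qed.

Lemma subspace_orthogonal (b : V -> V -> R) (S : V -> Prop) :
  bilinear_form b -> subspace (fun x => forall z, S z -> b x z = 0).
Proof.
move=> bb; split=> [z _|a x y hx hy z Sz]; first exact: bilinear_form0l.
by case: bb => bl _; rewrite bl hx // hy // mulr0 addr0.
Qed.

Lemma subspaceI (S T : V -> Prop) :
  subspace S -> subspace T -> subspace (fun x => S x /\ T x).
Proof.
move=> [S0 SD] [T0 TD]; split=> // a x y [Sx Tx] [Sy Ty].
by split; [apply: SD | apply: TD].
Qed.

Lemma inner_product_eq0 (ip : V -> V -> R) x :
  inner_product ip -> ip x x = 0 -> x = 0.
Proof.
case=> _ _ ipos ipx; apply/eqP; apply: contraLR isT => /ipos.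
by rewrite ipx ltxx.
Qed.

Lemma skew_map_two_form (ip : V -> V -> R) (F : V -> V) :
  inner_product ip -> linear_map F ->
  (forall X Y, ip (F X) Y = - ip X (F Y)) ->
  two_form (fun X Y => ip (F X) Y).
Proof.
move=> [[il ir] isym _] Flin Fskew; split; first split.
- by move=> a x y z; rewrite Flin il.
- by move=> a x y z; rewrite ir.
- by move=> x; apply/eqP; rewrite -eqNr {2}Fskew isym.
Qed.

Lemma skew_map_form_kernel (ip : V -> V -> R) (F : V -> V) x :
  inner_product ip -> form_kernel (fun X Y => ip (F X) Y) x <-> F x = 0.
Proof.
move=> ipI; split=> [Fx0 | Fx0 y]; first exact: inner_product_eq0 ipI (Fx0 _).
by case: ipI => ipb _ _; rewrite Fx0 bilinear_form0l.
Qed.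

End FormsAndSubspaces.

Section KernelOfClosedForm.
Variables (R : realType) (V : vectType R) (br : V -> V -> V).

Lemma abelian_subalgebraW (S : V -> Prop) :
  subspace S -> (forall x y, S x -> S y -> br x y = 0) ->
  abelian_subalgebra br S.
Proof. by move=> [S0 SD] Sbr; split=> // x y Sx Sy; rewrite Sbr. Qed.

Lemma abelian_subalgebraS (S T : V -> Prop) :
  subspace S -> (forall x, S x -> T x) -> abelian_subalgebra br T ->
  abelian_subalgebra br S.
Proof.
move=> Ssub ST [_ _ Tbr]; apply: abelian_subalgebraW => // x y /ST + /ST.
by apply: Tbr.
Qed.

Lemma two_step_bracket_center :
  two_step_nilpotent br -> forall x y, center br (br x y).
Proof. by move=> nil x y U; apply: nil. Qed.

Lemma closed_form_kernel_bracket (w : V -> V -> R) x y :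
  two_form w -> closed_form br w ->
  form_kernel w x -> form_kernel w y -> form_kernel w (br x y).
Proof.
move=> wf cl kx ky T; have := cl x y T.
rewrite (two_form_skew wf (br y T)) kx (two_form_skew wf (br T x)) ky.
by rewrite oppr0 !addr0.
Qed.

Lemma closed_form_kernel_abelian (w : V -> V -> R) :
  two_step_nilpotent br -> two_form w -> closed_form br w ->
  (forall Z, form_kernel w Z -> center br Z -> Z = 0) ->
  abelian_subalgebra br (form_kernel w).
Proof.
move=> nil wf cl kz; apply: abelian_subalgebraW.
  by apply: form_kernel_subspace; case: wf.
move=> x y kx ky; apply: kz; first exact: closed_form_kernel_bracket.
exact: two_step_bracket_center.
Qed.

End KernelOfClosedForm.

Theorem mainTheorem4 (R : realType) (V : vectType R) (br : V -> V -> V) :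
  lie_bracket br -> two_step_nilpotent br ->
  (forall w : V -> V -> R,
     two_form w -> closed_form br w ->
     (forall Z : V, form_kernel w Z -> center br Z -> Z = 0) ->
     abelian_subalgebra br (form_kernel w))
  /\
  (forall (ip : V -> V -> R) (F : V -> V),
     inner_product ip -> linear_map F ->
     (forall X Y : V, ip (F X) Y = - ip X (F Y)) ->
     let v := fun X : V => forall Z : V, center br Z -> ip X Z = 0 in
     (forall X : V, v X -> center br (F X)) ->
     (forall Z : V, center br Z -> v (F Z)) ->
     closed_form br (fun X Y => ip (F X) Y) ->
     (forall Z : V, center br Z <-> exists2 X : V, v X & F X = Z) ->
     abelian_subalgebra br (fun X : V => v X /\ F X = 0)).
Proof.
move=> _ nil; split=> [w|ip F ipI Flin Fskew v _ _ cl onto].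
  exact: closed_form_kernel_abelian.
have ipb : bilinear_form ip by case: ipI.
have kerF x : form_kernel (fun X Y => ip (F X) Y) x <-> F x = 0.
  exact: skew_map_form_kernel.
have kerF_center Z : F Z = 0 -> center br Z -> Z = 0.
  move=> FZ /onto[X _ FX]; apply: (inner_product_eq0 ipI).
  by rewrite -{1}FX Fskew FZ bilinear_form0r ?oppr0.
apply: abelian_subalgebraS (closed_form_kernel_abelian nil _ cl _).
- exact: subspaceI (subspace_orthogonal _ ipb) (subspace_linear_kernel Flin).
- by move=> x [_ /kerF].
- exact: skew_map_two_form.
- by move=> Z /kerF; apply: kerF_center.
Qed.
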